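(* Let $T$ be a $J$-unitary operator on ${\cal K}$. Then the geometric multiplicity of $1$ as an eigenvalue of $T$ equals the multiplicity of $1$ as an eigenvalue of $V(T)$, and the eigenvectors coincide: $\mathrm{Ker}(T-{\bf 1})=\mathrm{Ker}(V(T)-{\bf 1})$.
   Context: ${\cal H}$ is a separable complex Hilbert space, ${\cal K}={\cal H}\oplus{\cal H}$, $J=\begin{pmatrix}{\bf 1}&0\\0&-{\bf 1}\end{pmatrix}$. A bounded invertible $T$ on ${\cal K}$ is $J$-unitary if $T^*JT=J$; writing $T=\begin{pmatrix}a&b\\c&d\end{pmatrix}$ the blocks $a,d$ are invertible. $V(T)$ denotes the unitary $V(T)=\begin{pmatrix}(a^* )^{-1}&bd^{-1}\\-d^{-1}c&d^{-1}\end{pmatrix}=\begin{pmatrix}a-bd^{-1}c&bd^{-1}\\-d^{-1}c&d^{-1}\end{pmatrix}$. *)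

From mathcomp Require Import all_boot all_order all_algebra complex.
From mathcomp Require Import boolp classical_sets reals.
Set Implicit Arguments. Unset Strict Implicit. Unset Printing Implicit Defensive.
Import Order.TTheory GRing.Theory Num.Theory.
Local Open Scope ring_scope.
Local Open Scope classical_set_scope.

Section Hilbert.
Variables (R : realType) (W : lmodType R[i]) (ip : W -> W -> R[i]).

Definition hnorm (x : W) : R := Num.sqrt (complex.Re (ip x x)).

Definition is_inner_product : Prop :=
  [/\ (forall (k : R[i]) (x y z : W), ip (k *: x + y) z = k * ip x z + ip y z),
      (forall x y : W, ip y x = (ip x y)^*),
      (forall x : W, 0 <= ip x x)
    & (forall x : W, ip x x = 0 -> x = 0)].

Definition hcomplete : Prop :=
  forall u : nat -> W,
    (forall e : R, 0 < e -> exists N : nat, forall m n : nat,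
        (N <= m)%N -> (N <= n)%N -> hnorm (u m - u n) < e) ->
    exists l : W, forall e : R, 0 < e -> exists N : nat, forall n : nat,
        (N <= n)%N -> hnorm (u n - l) < e.

Definition hseparable : Prop :=
  exists s : nat -> W, forall (x : W) (e : R), 0 < e -> exists n : nat, hnorm (x - s n) < e.

Definition is_sep_hilbert : Prop := [/\ is_inner_product, hcomplete & hseparable].

Definition is_linear_op (f : W -> W) : Prop :=
  forall (k : R[i]) (x y : W), f (k *: x + y) = k *: f x + f y.

Definition is_bounded_op (f : W -> W) : Prop :=
  is_linear_op f /\ exists M : R, forall x : W, hnorm (f x) <= M * hnorm x.

Definition is_bounded_invertible (f : W -> W) : Prop :=
  is_bounded_op f /\ exists g : W -> W, [/\ is_bounded_op g, cancel f g & cancel g f].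

Definition is_adjoint (f S : W -> W) : Prop :=
  forall x y : W, ip (f x) y = ip x (S y).

Definition ker1 (f : W -> W) : set W := [set x | f x - x = 0].
End Hilbert.

Section Krein.
Variables (R : realType) (H : lmodType R[i]) (ip : H -> H -> R[i]).

(* K = H (+) H with the direct-sum inner product *)
Definition ipK (p q : (H * H)%type) : R[i] := ip p.1 q.1 + ip p.2 q.2.

Definition Jop (p : (H * H)%type) : (H * H)%type := (p.1, - p.2).

Definition is_J_unitary (T : (H * H)%type -> (H * H)%type) : Prop :=
  is_bounded_invertible ipK T /\
  exists S, is_adjoint ipK T S /\ forall p, S (Jop (T p)) = Jop p.

(* blocks of T = [[a, b], [c, d]] *)
Definition blk_a (T : (H * H)%type -> (H * H)%type) (x : H) : H := (T (x, 0)).1.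
Definition blk_b (T : (H * H)%type -> (H * H)%type) (y : H) : H := (T (0, y)).1.
Definition blk_c (T : (H * H)%type -> (H * H)%type) (x : H) : H := (T (x, 0)).2.
Definition blk_d (T : (H * H)%type -> (H * H)%type) (y : H) : H := (T (0, y)).2.

(* inverse of an operator (meaningful when it is bijective, which is the case
   for the block d of a J-unitary T) *)
Definition op_inv (f : H -> H) (y : H) : H := xget 0 [set x | f x = y].

(* V(T) = [[a - b d^-1 c, b d^-1], [- d^-1 c, d^-1]] *)
Definition VT (T : (H * H)%type -> (H * H)%type) (p : (H * H)%type) : (H * H)%type :=
  let dinv := op_inv (blk_d T) in
  (blk_a T p.1 - blk_b T (dinv (blk_c T p.1)) + blk_b T (dinv p.2),
   - dinv (blk_c T p.1) + dinv p.2).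
End Krein.

From mathcomp Require Import all_boot all_order all_algebra complex.
From mathcomp Require Import boolp classical_sets reals.
From mathcomp Require Import ring lra.
Import Order.TTheory GRing.Theory Num.Theory.
Local Open Scope ring_scope.
Local Open Scope classical_set_scope.

Set Implicit Arguments.
Unset Strict Implicit.
Unset Printing Implicit Defensive.

(* Write T = [[a, b], [c, d]].  Once d is a bijection, both kernel equations
   reduce to [a x + b y = x] and [c x + d y = y], because the second row of
   [V(T) (x, y) = (x, y)] reads [d^-1 (y - c x) = y].  The J-unitarity of T
   gives [|d y|^2 = |y|^2 + |b y|^2], so d is bounded below and injective; the
   same identity for [T^-1 = J T^* J] bounds [d^*] below.  Hence [d d^*] is a
   bounded coercive operator, which is onto because [w + t (z - d d^* w)] is a
   contraction for small [t > 0]; so d is onto. *)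

Lemma bernoulli_ineq (R : realDomainType) (x : R) (n : nat) :
  0 <= x -> 1 + n%:R * x <= (1 + x) ^+ n.
Proof.
move=> x0; elim: n => [|n IH]; first by rewrite mul0r addr0 expr0.
rewrite exprS -natr1.
have : 0 <= (1 + x) * ((1 + x) ^+ n - (1 + n%:R * x)) by rewrite mulr_ge0 ?subr_ge0 ?addr_ge0.
have : 0 <= n%:R * x * x by rewrite !mulr_ge0 ?ler0n.
nra.
Qed.

Lemma exists_exprn_lt (R : archiRealFieldType) (q e : R) :
  0 <= q -> q < 1 -> 0 < e -> exists n : nat, q ^+ n < e.
Proof.
move=> q0 q1 e0; have [->|qn0] := eqVneq q 0; first by exists 1%N; rewrite expr1.
have qp : 0 < q by rewrite lt0r qn0.
set x := q^-1 - 1.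
have x0 : 0 < x by rewrite subr_gt0 invf_gt1.
have ex0 : 0 <= (e * x)^-1 by rewrite invr_ge0 ltW ?mulr_gt0.
have [n hb] : exists n : nat, (e * x)^-1 < n%:R.
  by exists (Num.Def.archi_bound (e * x)^-1); exact: archi_boundP.
exists n; have ex : 0 < e * x by rewrite mulr_gt0.
have hn : 1 < e * (n%:R * x).
  by rewrite [n%:R * x]mulrC mulrA -{1}(mulfV (lt0r_neq0 ex)) ltr_pM2l.
have qx : q ^+ n * (1 + x) ^+ n = 1 by rewrite addrC subrK -exprMn mulfV ?expr1n.
have qn_ge0 : 0 <= q ^+ n by rewrite exprn_ge0.
have qnb : q ^+ n * (1 + n%:R * x) <= 1.
  by rewrite -[leRHS]qx ler_wpM2l //; apply: bernoulli_ineq; exact: ltW.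
rewrite ltNge; apply/negP => le_eq.
have : e * (n%:R * x) <= q ^+ n * (n%:R * x) by rewrite ler_wpM2r // mulr_ge0 ?ler0n // ltW.
lra.
Qed.

Section InnerProduct.
Variables (R : realType) (W : lmodType R[i]) (ip : W -> W -> R[i]).
Hypothesis ip_inner : is_inner_product ip.

Local Notation ipr x y := (complex.Re (ip x y)).
Local Notation hn := (hnorm ip).

Lemma ip_linear k x y z : ip (k *: x + y) z = k * ip x z + ip y z.
Proof. by case: ip_inner. Qed.

Lemma ipC x y : ip y x = (ip x y)^*.
Proof. by case: ip_inner. Qed.

Lemma ip_self_ge0 x : 0 <= ip x x.
Proof. by case: ip_inner. Qed.

Lemma ip_self_eq0 x : ip x x = 0 -> x = 0.
Proof. by case: ip_inner => _ _ _; apply. Qed.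

Lemma ipDl x y z : ip (x + y) z = ip x z + ip y z.
Proof. by have := ip_linear 1 x y z; rewrite scale1r mul1r. Qed.

Lemma ip0l z : ip 0 z = 0.
Proof. by apply: (addrI (ip 0 z)); rewrite -ipDl !addr0. Qed.

Lemma ipZl k x z : ip (k *: x) z = k * ip x z.
Proof. by rewrite -[k *: x]addr0 ip_linear ip0l addr0. Qed.

Lemma ipNl x z : ip (- x) z = - ip x z.
Proof. by rewrite -scaleN1r ipZl mulN1r. Qed.

Lemma ip_conj x y : (ip x y)^* = ip y x.
Proof. by rewrite [ip y x]ipC. Qed.

Lemma ipDr x y z : ip x (y + z) = ip x y + ip x z.
Proof. by rewrite ipC ipDl rmorphD; congr (_ + _); exact: ip_conj. Qed.

Lemma ip0r z : ip z 0 = 0.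
Proof. by rewrite ipC ip0l rmorph0. Qed.

Lemma ipNr x z : ip x (- z) = - ip x z.
Proof. by rewrite ipC ipNl rmorphN; congr (- _); exact: ip_conj. Qed.

Lemma ipBr x y z : ip x (y - z) = ip x y - ip x z.
Proof. by rewrite ipDr ipNr. Qed.

Lemma ip_ortho_eq0 x : (forall y, ip y x = 0) -> x = 0.
Proof. by move=> h; apply: ip_self_eq0; apply: h. Qed.

Lemma Re_conj (w : R[i]) : complex.Re (w^*) = complex.Re w.
Proof. by case: w. Qed.

Lemma ReD (w v : R[i]) : complex.Re (w + v) = complex.Re w + complex.Re v.
Proof. by case: w; case: v. Qed.

Lemma ReN (w : R[i]) : complex.Re (- w) = - complex.Re w.
Proof. by case: w. Qed.

Lemma Re_realM (t : R) (w : R[i]) : complex.Re ((t%:C)%C * w) = t * complex.Re w.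
Proof. by case: w => a b /=; simpc. Qed.

Lemma iprC x y : ipr y x = ipr x y.
Proof. by rewrite ipC Re_conj. Qed.

Lemma iprDl x y z : ipr (x + y) z = ipr x z + ipr y z.
Proof. by rewrite ipDl ReD. Qed.

Lemma iprDr x y z : ipr x (y + z) = ipr x y + ipr x z.
Proof. by rewrite ipDr ReD. Qed.

Lemma iprNl x y : ipr (- x) y = - ipr x y.
Proof. by rewrite ipNl ReN. Qed.

Lemma iprNr x y : ipr x (- y) = - ipr x y.
Proof. by rewrite ipNr ReN. Qed.

Lemma iprZl t x y : ipr ((t%:C)%C *: x) y = t * ipr x y.
Proof. by rewrite ipZl Re_realM. Qed.

Lemma iprZr t x y : ipr x ((t%:C)%C *: y) = t * ipr x y.
Proof. by rewrite iprC iprZl iprC. Qed.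

Lemma ipr_self_ge0 x : 0 <= ipr x x.
Proof. by move: (ip_self_ge0 x); rewrite lecE => /andP[]. Qed.

Lemma ipr_self_eq0 x : ipr x x = 0 -> x = 0.
Proof.
move=> h0; apply: ip_self_eq0; move: (ip_self_ge0 x) h0.
by rewrite lecE; case: (ip x x) => a b /= /andP[/eqP -> _] ->.
Qed.

Lemma ipr_expand x y t :
  ipr (x + (t%:C)%C *: y) (x + (t%:C)%C *: y) = ipr x x + 2 * t * ipr x y + t ^+ 2 * ipr y y.
Proof. by rewrite !iprDl !iprDr !iprZl !iprZr (iprC y x) expr2; ring. Qed.

Lemma ipr_CauchySchwarz x y : ipr x y ^+ 2 <= ipr x x * ipr y y.
Proof.
have [y0|ny0] := eqVneq (ipr y y) 0.
  by rewrite (ipr_self_eq0 y0) !ip0r /= expr0n mulr0.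
have ny : 0 < ipr y y by rewrite lt0r ny0 ipr_self_ge0.
set r := ipr x y; set s := - r / ipr y y.
(* minimise the quadratic [ipr (x + s y) (x + s y)] over [s] *)
have h := ipr_self_ge0 (x + (s%:C)%C *: y); rewrite ipr_expand -/r in h.
have e : ipr y y * (ipr x x + 2 * s * r + s ^+ 2 * ipr y y) = ipr x x * ipr y y - r ^+ 2.
  by rewrite /s; field; rewrite ny0.
by rewrite -subr_ge0 -e mulr_ge0 // ltW.
Qed.

Lemma hnorm_ge0 x : 0 <= hn x.
Proof. exact: sqrtr_ge0. Qed.

Lemma hnorm_sqr x : hn x ^+ 2 = ipr x x.
Proof. by rewrite sqr_sqrtr // ipr_self_ge0. Qed.

Lemma ipr_le_hnormM x y : ipr x y <= hn x * hn y.
Proof.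
apply: le_trans (ler_norm _) _.
rewrite -(ler_pXn2r (n := 2)) ?nnegrE ?mulr_ge0 ?hnorm_ge0 //.
by rewrite real_normK ?num_real // exprMn !hnorm_sqr ipr_CauchySchwarz.
Qed.

Lemma hnorm0 : hn 0 = 0.
Proof. by rewrite /hnorm ip0r sqrtr0. Qed.

Lemma hnorm_eq0 x : hn x = 0 -> x = 0.
Proof. by move=> h; apply: ipr_self_eq0; rewrite -hnorm_sqr h expr0n. Qed.

Lemma hnormN x : hn (- x) = hn x.
Proof. by rewrite /hnorm iprNl iprNr opprK. Qed.

Lemma hnormD x y : hn (x + y) <= hn x + hn y.
Proof.
rewrite -(ler_pXn2r (n := 2)) ?nnegrE ?addr_ge0 ?hnorm_ge0 //.
rewrite hnorm_sqr -[y]scale1r ipr_expand scale1r sqrrD !hnorm_sqr expr1n mul1r.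
by have := ipr_le_hnormM x y; lra.
Qed.

Lemma hdistC x y : hn (x - y) = hn (y - x).
Proof. by rewrite -hnormN opprB. Qed.

Lemma hdist_triangle x y z : hn (x - z) <= hn (x - y) + hn (y - z).
Proof. by rewrite -[x - z](subrKA y) hnormD. Qed.

Section Complete.
Hypothesis W_complete : hcomplete ip.
Variables (F : W -> W) (q : R).
Hypotheses (q_ge0 : 0 <= q) (q_lt1 : q < 1).
Hypothesis F_contraction : forall x y, hn (F x - F y) <= q * hn (x - y).

Local Notation u n := (iter n F 0).

Lemma iter_contraction_dist m n :
  (n <= m)%N -> hn (u m - u n) * (1 - q) <= hn (u 1 - u 0) * q ^+ n.
Proof.
set C := hn (u 1 - u 0).
have step k : hn (u k.+1 - u k) <= q ^+ k * C.
  elim: k => [|k IH]; first by rewrite expr0 mul1r.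
  rewrite !iterS; apply: le_trans (F_contraction _ _) _.
  by rewrite exprS -mulrA ler_wpM2l.
suff acc j : hn (u (n + j)%N - u n) * (1 - q) <= C * (q ^+ n - q ^+ (n + j)).
  move=> /subnKC <-; apply: le_trans (acc _) _.
  by rewrite ler_wpM2l ?hnorm_ge0 // lerBlDr lerDl exprn_ge0.
elim: j => [|j IH]; first by rewrite addn0 subrr hnorm0 mul0r subrr mulr0.
have q1 : 0 <= 1 - q by rewrite subr_ge0 ltW.
have tri := ler_wpM2r q1 (hdist_triangle (u (n + j).+1) (u (n + j)%N) (u n)).
have := ler_wpM2r q1 (step (n + j)%N).
rewrite addnS exprS; rewrite mulrDl in tri; lra.
Qed.

Lemma iter_contraction_cvg :
  exists l, forall e, 0 < e -> exists N, forall n, (N <= n)%N -> hn (u n - l) < e.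
Proof.
apply: W_complete => e e0; set C := hn (u 1 - u 0).
have q1 : 0 < 1 - q by rewrite subr_gt0.
have C1 : 0 < C + 1 by rewrite ltr_wpDl ?hnorm_ge0.
have [N hN] := exists_exprn_lt q_ge0 q_lt1 (divr_gt0 (mulr_gt0 e0 q1) C1).
have small k : (N <= k)%N -> C * q ^+ k < e * (1 - q).
  move=> /(ler_wiXn2l q_ge0 (ltW q_lt1)) /(ler_wpM2l (hnorm_ge0 (u 1 - u 0))).
  move: hN; rewrite ltr_pdivlMr // -/C => hN.
  have := exprn_ge0 N q_ge0; lra.
exists N; suff key m n : (N <= n <= m)%N -> hn (u m - u n) < e.
  move=> m n Nm Nn; have [le_nm|/ltnW le_mn] := leqP n m; first by apply: key; rewrite Nn.
  by rewrite hdistC; apply: key; rewrite Nm.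
move=> /andP[Nn le_nm]; rewrite -(ltr_pM2r q1).
by have := small n Nn; have := iter_contraction_dist le_nm; rewrite -/C; lra.
Qed.

Lemma contraction_fixpoint : exists l, F l = l.
Proof.
have [l hl] := iter_contraction_cvg; exists l.
suff : hn (F l - l) = 0 by move/hnorm_eq0/eqP; rewrite subr_eq0 => /eqP.
apply/eqP; rewrite eq_le hnorm_ge0 andbT leNgt; apply/negP => pos.
have [N hN] := hl _ (divr_gt0 pos (ltr0Sn _ 1)).
have h0 := hN N (leqnn N); have h1 := hN N.+1 (leqnSn N); rewrite iterS in h1.
have tri := hdist_triangle (F l) (F (u N)) l.
have con := F_contraction l (u N); rewrite [hn (l - u N)]hdistC in con.
have : 0 <= (1 - q) * hn (u N - l) by rewrite mulr_ge0 ?hnorm_ge0 // subr_ge0 ltW.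
lra.
Qed.

End Complete.

Lemma coercive_surjective (P : W -> W) (K : R) :
  hcomplete ip -> {morph P : x y / x - y} ->
  (forall e, ipr (P e) (P e) <= K * ipr e e) ->
  (forall e, ipr e e <= ipr e (P e)) ->
  forall z, exists w, P w = z.
Proof.
move=> hc PB Pbd Ppos z.
set K1 := Num.max K 1; set t := K1^-1.
have K1_ge1 : 1 <= K1 by rewrite le_max lexx orbT.
have K1_gt0 : 0 < K1 := lt_le_trans ltr01 K1_ge1.
have t0 : 0 < t by rewrite invr_gt0.
have t1 : t <= 1 by rewrite invf_le1.
have tK : t * K1 = 1 by rewrite mulVf // gt_eqF.
have P1bd e : ipr (P e) (P e) <= K1 * ipr e e.
  by apply: le_trans (Pbd e) _; rewrite ler_wpM2r ?ipr_self_ge0 // le_max lexx.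
pose F w := w + (t%:C)%C *: (z - P w).
have FB x y : F x - F y = (x - y) + ((- t)%:C)%C *: P (x - y).
  rewrite /F opprD addrACA PB rmorphN; congr (_ + _).
  by rewrite scaleNr !scalerBr opprB addrC subrKA opprB.
set q := Num.sqrt (1 - t).
have q_ge0 : 0 <= q by exact: sqrtr_ge0.
have q_lt1 : q < 1 by rewrite /q -[ltRHS]sqrtr1 ltr_sqrt // gtrBl.
have hF x y : hn (F x - F y) <= q * hn (x - y).
  rewrite FB /hnorm /q -sqrtrM ?subr_ge0 //; apply: ler_wsqrtr.
  rewrite ipr_expand; set e := x - y.
  (* [|e - t P e|^2 <= (1 - 2 t + t^2 K1) |e|^2 = (1 - t) |e|^2] *)
  have a1 : 0 <= t * t * (K1 * ipr e e - ipr (P e) (P e)).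
    by rewrite mulr_ge0 ?mulr_ge0 ?subr_ge0 ?P1bd ?ltW.
  have a2 : 0 <= t * (ipr e (P e) - ipr e e) by rewrite mulr_ge0 ?subr_ge0 ?Ppos ?ltW.
  have a3 : t * t * K1 * ipr e e = t * ipr e e by rewrite -(mulrA t t) tK mulr1.
  rewrite sqrrN expr2; lra.
have [l /eqP] := contraction_fixpoint hc q_ge0 q_lt1 hF.
rewrite -subr_eq0 /F addrC addKr scaler_eq0 subr_eq0 => /orP[|/eqP->]; last by exists l.
by rewrite (_ : 0 = (0%:C)%C) // => /eqP/complexI/eqP; rewrite gt_eqF.
Qed.

End InnerProduct.

Lemma linear_opB (R : realType) (W : lmodType R[i]) (f : W -> W) :
  is_linear_op f -> {morph f : x y / x - y}.
Proof. by move=> f_lin x y; rewrite addrC -scaleN1r f_lin scaleN1r addrC. Qed.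

Lemma ker1E (R : realType) (W : lmodType R[i]) (f : W -> W) p : ker1 f p <-> f p = p.
Proof. by rewrite /ker1 /=; split => [/eqP|->]; [rewrite subr_eq0 => /eqP | exact: subrr]. Qed.

Lemma op_invK (R : realType) (H : lmodType R[i]) (f : H -> H) :
  (forall z, exists y, f y = z) -> cancel (op_inv f) f.
Proof.
move=> f_surj z; have [y fy] := f_surj z.
by have := @xgetPex _ 0 [set w | f w = z] (ex_intro _ y fy).
Qed.

Lemma op_invB (R : realType) (H : lmodType R[i]) (f : H -> H) :
  injective f -> (forall z, exists y, f y = z) -> {morph f : x y / x - y} ->
  {morph op_inv f : x y / x - y}.
Proof. by move=> f_inj f_surj fB x y; apply: f_inj; rewrite fB !op_invK. Qed.

Lemma op_inv_can (R : realType) (H : lmodType R[i]) (f : H -> H) :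
  injective f -> (forall z, exists y, f y = z) -> cancel f (op_inv f).
Proof. by move=> f_inj f_surj y; apply: f_inj; rewrite op_invK. Qed.

Lemma JopK (R : realType) (H : lmodType R[i]) : involutive (@Jop R H).
Proof. by move=> [x y]; rewrite /Jop opprK. Qed.

Section BlockKernel.
Variables (R : realType) (H : lmodType R[i]) (T : (H * H)%type -> (H * H)%type).
Hypothesis TB : {morph T : p q / p - q}.

Local Notation a := (blk_a T).
Local Notation b := (blk_b T).
Local Notation c := (blk_c T).
Local Notation d := (blk_d T).

Lemma pairB (x1 y1 x2 y2 : H) : (x1, y1) - (x2, y2) = (x1 - x2, y1 - y2).
Proof. by []. Qed.

Lemma blk_pair x y : T (x, y) = (a x + b y, c x + d y).
Proof.
have : T (x, y) - T (0, y) = T (x, 0) by rewrite -TB pairB subr0 subrr.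
by move/eqP; rewrite subr_eq => /eqP ->.
Qed.

Lemma blk_bB : {morph b : y1 y2 / y1 - y2}.
Proof. by move=> y1 y2; rewrite /blk_b -[in LHS](subrr 0) -pairB TB. Qed.

Lemma blk_dB : {morph d : y1 y2 / y1 - y2}.
Proof. by move=> y1 y2; rewrite /blk_d -[in LHS](subrr 0) -pairB TB. Qed.

Hypotheses (d_inj : injective d) (d_surj : forall z, exists y, d y = z).

Local Notation dinv := (op_inv d).

Lemma VT_pair x y : VT T (x, y) = (a x + b (dinv (y - c x)), dinv (y - c x)).
Proof.
rewrite /VT /= (op_invB d_inj d_surj blk_dB) blk_bB.
by congr (_, _); [rewrite addrAC addrA | rewrite addrC].
Qed.

Lemma ker1_VT : ker1 T = ker1 (VT T).
Proof.
apply/funext => -[x y]; apply/propext; rewrite !ker1E blk_pair VT_pair !pair_equal_spec.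
have second_row : (dinv (y - c x) = y) <-> (c x + d y = y).
  split => [e|e]; first by rewrite -[y in d y]e op_invK // addrC subrK.
  by rewrite -[y in y - c x]e addrC addKr op_inv_can.
rewrite -(propext second_row).
by split=> -[first e]; split=> //; [rewrite e | rewrite -e].
Qed.

End BlockKernel.

Section JUnitary.
Variables (R : realType) (H : lmodType R[i]) (ip : H -> H -> R[i]).
Hypotheses (ip_inner : is_inner_product ip) (H_complete : hcomplete ip).
Variables (T g S : (H * H)%type -> (H * H)%type) (M : R).
Hypothesis T_lin : is_linear_op T.
Hypothesis T_bounded : forall p, hnorm (ipK ip) (T p) <= M * hnorm (ipK ip) p.
Hypothesis gK : cancel g T.
Hypothesis S_adjoint : is_adjoint (ipK ip) T S.
Hypothesis S_J_T : forall p, S (Jop (T p)) = Jop p.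

Local Notation ipr x y := (complex.Re (ip x y)).
Local Notation hn := (hnorm ip).
Local Notation b := (blk_b T).
Local Notation d := (blk_d T).

Let TB := linear_opB T_lin.
Let dstar w := (S (0, w)).2.
Let M1 := Num.max M 1.

Lemma ipK_J_T p : ipK ip (T p) (Jop (T p)) = ipK ip p (Jop p).
Proof. by rewrite S_adjoint S_J_T. Qed.

Lemma T_J_S p : T (Jop (S p)) = Jop p.
Proof. by have := S_J_T (g (Jop p)); rewrite gK JopK => ->; rewrite JopK gK. Qed.

Lemma d_norm_ge y : ipr y y <= ipr (d y) (d y).
Proof.
have := congr1 (@complex.Re R) (ipK_J_T (0, y)); rewrite /ipK /Jop /=.
rewrite !ReD !(iprNr ip_inner) (ip0r ip_inner) -/(b y) -/(d y).
by have := ipr_self_ge0 ip_inner (b y); lra.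
Qed.

Lemma dstar_norm_ge w : ipr w w <= ipr (dstar w) (dstar w).
Proof.
have := congr1 (@complex.Re R) (ipK_J_T (Jop (S (0, w)))); rewrite T_J_S /ipK /Jop /=.
rewrite !ReD !(iprNr ip_inner) !(iprNl ip_inner) (ip0r ip_inner) opprK -/(dstar w).
by have := ipr_self_ge0 ip_inner (S (0, w)).1; lra.
Qed.

Lemma d_adjoint y w : ip (d y) w = ip y (dstar w).
Proof.
have := S_adjoint (0, y) (0, w); rewrite /ipK /= (ip0r ip_inner) (ip0l ip_inner) !add0r.
by rewrite -/(d y).
Qed.

Lemma d_inj : injective d.
Proof.
move=> y1 y2 e; apply/eqP; rewrite -subr_eq0; apply/eqP; apply: (ipr_self_eq0 ip_inner).
apply/eqP; rewrite eq_le ipr_self_ge0 // andbT.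
by have := d_norm_ge (y1 - y2); rewrite (blk_dB TB) e subrr ip0r.
Qed.

Lemma dstarB : {morph dstar : w1 w2 / w1 - w2}.
Proof.
move=> w1 w2; apply/eqP; rewrite -subr_eq0; apply/eqP; apply: (ip_ortho_eq0 ip_inner) => y.
by rewrite !(ipBr ip_inner) -!d_adjoint (ipBr ip_inner) subrr.
Qed.

Lemma M1_ge0 : 0 <= M1.
Proof. by rewrite le_max ler01 orbT. Qed.

Lemma d_bounded y : hn (d y) <= M1 * hn y.
Proof.
have norm_0y : hnorm (ipK ip) (0, y) = hn y by rewrite /hnorm /ipK /= ip0l // add0r.
have d_le_T : hn (d y) <= hnorm (ipK ip) (T (0, y)).
  by rewrite /hnorm /ipK ReD ler_wsqrtr // lerDr ipr_self_ge0.
apply: le_trans d_le_T (le_trans (T_bounded _) _).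
by rewrite norm_0y ler_wpM2r ?hnorm_ge0 // le_max lexx.
Qed.

Lemma dstar_bounded w : hn (dstar w) <= M1 * hn w.
Proof.
have : hn (dstar w) ^+ 2 <= M1 * hn (dstar w) * hn w.
  rewrite hnorm_sqr // -Re_conj ip_conj // -d_adjoint.
  apply: le_trans (ipr_le_hnormM ip_inner _ _) _.
  by rewrite ler_wpM2r ?hnorm_ge0 ?d_bounded.
have [->|pos] := eqVneq (hn (dstar w)) 0; first by rewrite mulr_ge0 ?hnorm_ge0 ?M1_ge0.
by rewrite expr2 mulrAC ler_pM2r // lt0r pos hnorm_ge0.
Qed.

Lemma d_surj z : exists y, d y = z.
Proof.
have ddB : {morph (fun w => d (dstar w)) : w1 w2 / w1 - w2}.
  by move=> w1 w2; rewrite /= dstarB (blk_dB TB).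
have dd_bounded e : ipr (d (dstar e)) (d (dstar e)) <= M1 ^+ 4 * ipr e e.
  rewrite -!hnorm_sqr // (_ : 4 = 2 * 2)%N // exprM -exprMn.
  rewrite ler_pXn2r ?nnegrE ?mulr_ge0 ?exprn_ge0 ?hnorm_ge0 ?M1_ge0 //.
  apply: le_trans (d_bounded _) _; rewrite expr2 -mulrA ler_wpM2l ?M1_ge0 //.
  exact: dstar_bounded.
have dd_coercive e : ipr e e <= ipr e (d (dstar e)).
  by rewrite iprC // d_adjoint; exact: dstar_norm_ge.
have [w <-] := coercive_surjective ip_inner H_complete ddB dd_bounded dd_coercive z.
by exists (dstar w).
Qed.
End JUnitary.

Theorem theorem3p19 (R : realType) (H : lmodType R[i]) (ip : H -> H -> R[i])
    (HH : is_sep_hilbert ip) (T : (H * H)%type -> (H * H)%type)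
    (HT : is_J_unitary ip T) :
  ker1 T = ker1 (VT T).
Proof.
case: HH => ip_inner H_complete _.
case: HT => [[[T_lin [M T_bounded]] [g [_ _ gK]]] [S [S_adjoint S_J_T]]].
apply: ker1_VT.
- exact: linear_opB.
- exact: (d_inj ip_inner T_lin S_adjoint S_J_T).
- exact: (d_surj ip_inner H_complete T_lin T_bounded gK S_adjoint S_J_T).
Qed.
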